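(* Let $(Q,f)$ be a triangulation quiver with at least three vertices. The following are equivalent: (i) $(Q,f)$ is the tetrahedral triangulation quiver; (ii) $n_\alpha=3$ for every arrow $\alpha\in Q_1$; (iii) $g^3$ is the identity on $Q_1$; (iv) there is an arrow $\beta\in Q_1$ with $n_\beta=n_{\bar\beta}=n_{f(\beta)}=n_{f(\bar\beta)}=3$.
   Context: A triangulation quiver is $(Q,f)$ with $Q$ a finite connected quiver, each vertex the source and target of exactly two arrows, and $f$ a permutation of $Q_1$ with $s(f(\alpha))=t(\alpha)$ and $f^3=\mathrm{id}$. For $\alpha\in Q_1$, $\bar\alpha$ is the other arrow with source $s(\alpha)$, $g(\alpha)=\overline{f(\alpha)}$, and $n_\alpha$ is the size of the $g$-orbit of $\alpha$. The tetrahedral triangulation quiver has vertices $1,\dots,6$, arrows $\alpha:3\to1,\beta:4\to2,\gamma:4\to1,\delta:1\to5,\varepsilon:2\to5,\eta:5\to4,\xi:5\to3,\varrho:2\to6,\sigma:3\to2,\mu:6\to3,\nu:1\to6,\omega:6\to4$ and $f$-orbits $(\alpha\,\nu\,\mu),(\beta\,\varrho\,\omega),(\gamma\,\delta\,\eta),(\varepsilon\,\xi\,\sigma)$; (i) means isomorphic to it as a quiver with permutation. *)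

From mathcomp Require Import all_boot all_fingroup.
Set Implicit Arguments. Unset Strict Implicit. Unset Printing Implicit Defensive.

Section TQ.
Variables (V A : finType) (s t : A -> V) (f : {perm A}).

Definition qadj : rel V :=
  fun u v => [exists a, ((s a == u) && (t a == v)) || ((s a == v) && (t a == u))].

Definition quiver_connected : Prop := forall u v : V, connect qadj u v.

Definition is_triangulation_quiver : Prop :=
  [/\ quiver_connected,
      forall v : V, #|[set a | s a == v]| = 2,
      forall v : V, #|[set a | t a == v]| = 2,
      forall a : A, s (f a) = t a
    & forall a : A, f (f (f a)) = a].

Definition qbar (a : A) : A := odflt a [pick b | (s b == s a) && (b != a)].

Definition qg (a : A) : A := qbar (f a).

Definition nq (a : A) : nat := fingraph.order qg a.
End TQ.

(* The tetrahedral triangulation quiver.  Vertex k (1..6) is the ordinal k-1;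
   arrows alpha,beta,gamma,delta,eps,eta,xi,rho,sigma,mu,nu,omega are 0..11. *)
Definition tetra_src (a : 'I_12) : 'I_6 :=
  inord (nth 0 [:: 2; 3; 3; 0; 1; 4; 4; 1; 2; 5; 0; 5] a).
Definition tetra_tgt (a : 'I_12) : 'I_6 :=
  inord (nth 0 [:: 0; 1; 0; 4; 4; 3; 2; 5; 1; 2; 5; 3] a).
Definition tetra_f (a : 'I_12) : 'I_12 :=
  inord (nth 0 [:: 10; 7; 3; 5; 6; 2; 8; 11; 4; 0; 9; 1] a).

Definition is_tetrahedral (V A : finType) (s t : A -> V) (f : {perm A}) : Prop :=
  exists (phiV : V -> 'I_6) (phiA : A -> 'I_12),
    [/\ bijective phiV, bijective phiA,
        forall a, tetra_src (phiA a) = phiV (s a),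
        forall a, tetra_tgt (phiA a) = phiV (t a)
      & forall a, tetra_f (phiA a) = phiA (f a)].

From Pilot Require Import Defs.
From mathcomp Require Import all_boot all_fingroup.
Set Implicit Arguments. Unset Strict Implicit. Unset Printing Implicit Defensive.

(* The tetrahedral quiver satisfies (ii)-(iv) by inspection of its twelve
   arrows. Conversely, each of (ii)-(iv) yields an arrow b such that g^3 fixes
   b, bar b, f b and f (bar b); then the arrows reached from b by f, g and bar
   obey the f- and bar-relations of the tetrahedral arrows, giving a map psi
   from the tetrahedral arrows to Q_1 that commutes with f and bar. By
   connectedness psi is onto. It is one-to-one because the tetrahedral arrows
   form a regular orbit of <f, g> = A_4, so the fibres of psi are the orbits of
   a subgroup H: H contains no involution, as all involutions of A_4 are
   conjugate to the one inducing the fixed-point-free bar, and H is not of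
   order 3, as Q_1 has 2|Q_0| >= 6 arrows. Vertices then correspond to the
   pairs {a, bar a}. *)

Lemma all_iota_lt n (P : pred nat) : all P (iota 0 n) -> forall k, k < n -> P k.
Proof. by move/allP=> allP k ltkn; apply: allP; rewrite mem_iota. Qed.

Lemma all_iota_lt2 n (P : nat -> nat -> bool) :
  all (fun i => all (P i) (iota 0 n)) (iota 0 n) ->
  forall i j, i < n -> j < n -> P i j.
Proof. by move=> /all_iota_lt allP i j /allP /all_iota_lt; apply. Qed.

Definition word_act (T : Type) (F G : T -> T) (w : seq bool) (x : T) : T :=
  foldl (fun y (c : bool) => if c then G y else F y) x w.

Fixpoint words_upto (n : nat) : seq (seq bool) :=
  if n is m.+1 then [::] :: [seq c :: w | c <- [:: false; true], w <- words_upto m]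
  else [:: [::]].

Definition orbit3_min (h : nat -> nat) (k : nat) : nat :=
  minn k (minn (h k) (h (h k))).

Lemma mem_minn m n : minn m n \in [:: m; n].
Proof. by rewrite /minn !inE; case: ifP; rewrite eqxx ?orbT. Qed.

Lemma mem_orbit3_min h k : orbit3_min h k \in [:: k; h k; h (h k)].
Proof.
have := mem_minn k (minn (h k) (h (h k))); have := mem_minn (h k) (h (h k)).
by rewrite /orbit3_min !inE => /orP [] /eqP-> /orP [] /eqP->; rewrite eqxx ?orbT.
Qed.

(* The tetrahedral quiver on natural numbers, so that finite checks compute
   (the ordinal versions in Defs go through [inord], which does not reduce). *)
Definition tet_f (k : nat) : nat := nth 0 [:: 10; 7; 3; 5; 6; 2; 8; 11; 4; 0; 9; 1] k.
Definition tet_bar (k : nat) : nat := nth 0 [:: 8; 2; 1; 10; 7; 6; 5; 4; 0; 11; 3; 9] k.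
Definition tet_src (k : nat) : nat := nth 0 [:: 2; 3; 3; 0; 1; 4; 4; 1; 2; 5; 0; 5] k.
Definition tet_tgt (k : nat) : nat := nth 0 [:: 0; 1; 0; 4; 4; 3; 2; 5; 1; 2; 5; 3] k.
Definition tet_g (k : nat) : nat := tet_bar (tet_f k).
Definition tet_act := word_act tet_f tet_g.

Lemma tet_f_lt k : k < 12 -> tet_f k < 12. Proof. by move: k; apply: all_iota_lt. Qed.
Lemma tet_bar_lt k : k < 12 -> tet_bar k < 12. Proof. by move: k; apply: all_iota_lt. Qed.
Lemma tet_g_lt k : k < 12 -> tet_g k < 12. Proof. by move/tet_f_lt/tet_bar_lt. Qed.
Lemma tet_src_lt k : k < 12 -> tet_src k < 6. Proof. by move: k; apply: all_iota_lt. Qed.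

Lemma tet_act_lt w k : k < 12 -> tet_act w k < 12.
Proof.
elim: w k => //= c w IHw k ltk; apply: IHw.
by case: c; [apply: tet_g_lt | apply: tet_f_lt].
Qed.

Lemma tet_gK3 k : k < 12 -> tet_g (tet_g (tet_g k)) = k.
Proof. by move=> ltk; apply/eqP; move: k ltk; apply: all_iota_lt. Qed.

Lemma uniq_tet_g_orbit k : k < 12 -> uniq [:: k; tet_g k; tet_g (tet_g k)].
Proof. by move: k; apply: all_iota_lt. Qed.

Lemma tet_bar_g k : k < 12 -> tet_bar (tet_g k) = tet_f k.
Proof. by move=> ltk; apply/eqP; move: k ltk; apply: all_iota_lt. Qed.

Lemma tet_bar_neq k : k < 12 -> tet_bar k != k.
Proof. by move: k; apply: all_iota_lt. Qed.

Lemma tet_src_bar k : k < 12 -> tet_src (tet_bar k) = tet_src k.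
Proof. by move=> ltk; apply/eqP; move: k ltk; apply: all_iota_lt. Qed.

Lemma tet_src_f k : k < 12 -> tet_src (tet_f k) = tet_tgt k.
Proof. by move=> ltk; apply/eqP; move: k ltk; apply: all_iota_lt. Qed.

Lemma tet_src_eq i j : i < 12 -> j < 12 ->
  tet_src i = tet_src j -> i = j \/ i = tet_bar j.
Proof.
move=> lti ltj /eqP src_ij.
have : (tet_src i == tet_src j) ==> (i == j) || (i == tet_bar j).
  by move: i j lti ltj {src_ij}; apply: all_iota_lt2.
by move/implyP/(_ src_ij)/orP => [] /eqP; [left | right].
Qed.

Lemma tetra_f_inord k : k < 12 -> tetra_f (inord k) = inord (tet_f k).
Proof. by move=> ltk; rewrite /tetra_f inordK. Qed.

Lemma tetra_src_inord k : k < 12 -> tetra_src (inord k) = inord (tet_src k).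
Proof. by move=> ltk; rewrite /tetra_src inordK. Qed.

Definition tet_path (i j : nat) : seq bool :=
  nth [::] (words_upto 4) (find (fun w => tet_act w i == j) (words_upto 4)).

Lemma tet_pathP i j : i < 12 -> j < 12 -> tet_act (tet_path i j) i = j.
Proof. by move=> lti ltj; apply/eqP; move: i j lti ltj; apply: all_iota_lt2; vm_compute. Qed.

Definition tet_transl (i j k : nat) : nat := tet_act (tet_path i k) j.

(* [tet_transl i j] is the translation of the regular A_4-orbit mapping i to j:
   either it meets bar, or it has order 3 and hence four orbits. *)
Lemma tet_transl_cases i j : i < 12 -> j < 12 -> i != j ->
  has (fun k => tet_transl i j k == tet_bar k) (iota 0 12)
  || (size (undup [seq orbit3_min (tet_transl i j) k | k <- iota 0 12]) <= 4).
Proof.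
move=> lti ltj; apply/implyP; move: i j lti ltj.
by apply: all_iota_lt2; vm_compute.
Qed.

Section TriangulationQuiver.
Variables (V A : finType) (s t : A -> V) (f : {perm A}).
Local Notation bar := (qbar s).
Local Notation g := (qg s f).

Lemma qadj_sym : symmetric (qadj s t).
Proof. by move=> u v; apply/existsP/existsP => -[a adj]; exists a; rewrite orbC. Qed.

Hypothesis tq : is_triangulation_quiver s t f.
Hypothesis card_V : 3 <= #|V|.

Lemma card_src_arrows v : #|[set a | s a == v]| = 2. Proof. by case: tq. Qed.
Lemma src_f a : s (f a) = t a. Proof. by case: tq. Qed.
Lemma fK3 a : f (f (f a)) = a. Proof. by case: tq. Qed.

Lemma card_src_arrowsD1 a : #|[set c | s c == s a] :\ a| = 1.
Proof. by have := cardsD1 a [set c | s c == s a]; rewrite card_src_arrows inE eqxx => -[]. Qed.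

Lemma qbar_spec a : (s (bar a) == s a) && (bar a != a).
Proof.
rewrite /qbar; case: pickP => [c // | none] /=.
have /eqP/cards1P [c src_a] := card_src_arrowsD1 a.
have : c \in [set c | s c == s a] :\ a by rewrite src_a set11.
by rewrite !inE andbC none.
Qed.

Lemma qbar_src a : s (bar a) = s a. Proof. by case/andP: (qbar_spec a) => /eqP. Qed.
Lemma qbar_neq a : bar a != a. Proof. by case/andP: (qbar_spec a). Qed.

Lemma qbar_eq_src a c : s c = s a -> c = a \/ c = bar a.
Proof.
move=> src_c; have [-> | neq_ca] := eqVneq c a; [by left | right].
have /eqP/cards1P [x src_a] := card_src_arrowsD1 a.
have : c \in [set c | s c == s a] :\ a by rewrite !inE neq_ca src_c eqxx.
have : bar a \in [set c | s c == s a] :\ a by rewrite !inE qbar_neq qbar_src eqxx.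
by rewrite src_a !inE => /eqP-> /eqP->.
Qed.

Lemma qbarK : involutive bar.
Proof.
move=> a; have src_bbar : s (bar (bar a)) = s a by rewrite !qbar_src.
have [// | bbar_a] := qbar_eq_src src_bbar.
by have := qbar_neq (bar a); rewrite bbar_a eqxx.
Qed.

Lemma f_qg a : f a = bar (g a). Proof. by rewrite /qg qbarK. Qed.

Lemma qg_inj : injective g.
Proof. by move=> a c /(can_inj qbarK) /perm_inj. Qed.

Lemma nq3_qg3 a : nq s f a = 3 -> g (g (g a)) = a.
Proof. by move=> nq_a; have := iter_order qg_inj a; rewrite -/(nq s f a) nq_a. Qed.

Lemma card_arrows : #|A| = #|V| * 2.
Proof.
rewrite -sum1_card (partition_big s xpredT) //= -sum_nat_const.
apply: eq_bigr => v _; rewrite -(card_src_arrows v) -sum1_card.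
by apply: eq_bigl => a; rewrite inE.
Qed.

Lemma qbar_qg2 a : g (g (g a)) = a -> bar (g (g a)) = g (f (bar a)).
Proof.
move=> gK3; have f_gga : f (g (g a)) = bar a by rewrite f_qg gK3.
by rewrite -[g (g a)]fK3 f_gga.
Qed.

Definition tet_frame (psi : nat -> A) : Prop :=
  (forall k, k < 12 -> f (psi k) = psi (tet_f k)) /\
  (forall k, k < 12 -> bar (psi k) = psi (tet_bar k)).

Section Frame.
Variable psi : nat -> A.
Hypothesis psi_f : forall k, k < 12 -> f (psi k) = psi (tet_f k).
Hypothesis psi_bar : forall k, k < 12 -> bar (psi k) = psi (tet_bar k).

Lemma frame_g k : k < 12 -> g (psi k) = psi (tet_g k).
Proof. by move=> ltk; rewrite /qg psi_f // psi_bar // tet_f_lt. Qed.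

Lemma frame_act w k : k < 12 -> psi (tet_act w k) = word_act f g w (psi k).
Proof.
elim: w k => //= c w IHw k ltk; rewrite IHw; last exact: (tet_act_lt [:: c] ltk).
by case: c; rewrite ?frame_g ?psi_f.
Qed.

Lemma frame_src_arrow a k : k < 12 -> s a = s (psi k) -> exists2 m, m < 12 & psi m = a.
Proof.
move=> ltk /qbar_eq_src [-> | ->]; first by exists k.
by exists (tet_bar k); rewrite ?tet_bar_lt ?psi_bar.
Qed.

Lemma frame_surj a : exists2 k, k < 12 & psi k = a.
Proof.
pose covered := [pred v | [exists k : 'I_12, s (psi k) == v]].
have closed_covered : closed (qadj s t) covered.
  apply: (intro_closed (sym_connect_sym qadj_sym)) => u v /existsP [c adj_c].
  move=> /existsP [k /eqP src_k]; apply/existsP.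
  case/orP: adj_c => /andP [/eqP src_c /eqP tgt_c].
    have src_c_k : s c = s (psi k) by rewrite src_c src_k.
    have [m ltm psi_m] := frame_src_arrow (ltn_ord k) src_c_k.
    by exists (Ordinal (tet_f_lt ltm)); rewrite /= -psi_f // psi_m src_f tgt_c.
  have src_fc_k : s (f c) = s (psi k) by rewrite src_f tgt_c src_k.
  have [m ltm psi_m] := frame_src_arrow (ltn_ord k) src_fc_k.
  exists (Ordinal (tet_f_lt (tet_f_lt ltm))).
  by rewrite /= -!psi_f ?tet_f_lt // psi_m fK3 src_c.
have : s a \in covered.
  case: tq => connected _ _ _ _.
  rewrite -(closed_connect closed_covered (connected (s (psi 0)) (s a))).
  by apply/existsP; exists ord0.
by case/existsP => k /eqP src_k; apply: (frame_src_arrow (ltn_ord k)); rewrite src_k.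
Qed.

Lemma frame_transl i j k : i < 12 -> j < 12 -> k < 12 ->
  psi i = psi j -> psi (tet_transl i j k) = psi k.
Proof.
by move=> lti ltj ltk psi_ij; rewrite -{2}(tet_pathP lti ltk) !frame_act // psi_ij.
Qed.

Lemma frame_inj i j : i < 12 -> j < 12 -> psi i = psi j -> i = j.
Proof.
move=> lti ltj psi_ij; apply/eqP; apply: contraT => neq_ij.
have transl_psi k (ltk : k < 12) := frame_transl lti ltj ltk psi_ij.
case/orP: (tet_transl_cases lti ltj neq_ij) => [/hasP [k] | few_orbits].
  rewrite mem_iota => /andP [_ ltk] /eqP transl_bar.
  by have := qbar_neq (psi k); rewrite psi_bar // -transl_bar transl_psi // eqxx.
have : #|A| <= 4.
  apply: leq_trans few_orbits; rewrite -(size_map psi); apply: leq_trans (card_size _).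
  apply/subset_leq_card/subsetP => a _; have [k ltk <-] := frame_surj a.
  have psi_orbit : psi (orbit3_min (tet_transl i j) k) = psi k.
    have := mem_orbit3_min (tet_transl i j) k.
    by rewrite !inE => /or3P [] /eqP ->; rewrite ?transl_psi ?tet_act_lt.
  by rewrite -psi_orbit map_f // mem_undup map_f // mem_iota.
by rewrite card_arrows; case: #|V| card_V => [|[|[|n]]].
Qed.

Lemma frame_nq a : nq s f a = 3.
Proof.
have [k ltk <-] := frame_surj a.
have lt_orbit : {subset [:: k; tet_g k; tet_g (tet_g k)] <= [pred m | m < 12]}.
  by move=> m; rewrite !inE => /or3P [] /eqP ->; rewrite ?tet_g_lt.
have inj_orbit : {in [:: k; tet_g k; tet_g (tet_g k)] &, injective psi}.
  by move=> x y /lt_orbit ltx /lt_orbit lty; apply: frame_inj.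
rewrite /nq -[3]/(size (map psi [:: k; tet_g k; tet_g (tet_g k)])).
apply: order_cycle; last exact: mem_head.
  by rewrite /= !frame_g ?tet_g_lt // tet_gK3 // !eqxx.
by rewrite (map_inj_in_uniq inj_orbit) uniq_tet_g_orbit.
Qed.

Lemma frame_src i j : i < 12 -> j < 12 ->
  s (psi i) = s (psi j) <-> tet_src i = tet_src j.
Proof.
move=> lti ltj; split.
  case/qbar_eq_src => [/(frame_inj lti ltj) -> // | ].
  by rewrite psi_bar // => /(frame_inj lti (tet_bar_lt ltj)) ->; rewrite tet_src_bar.
by case/(tet_src_eq lti ltj) => [-> // | ->]; rewrite -psi_bar // qbar_src.
Qed.

Lemma frame_tetrahedral : is_tetrahedral s t f.
Proof.
have psi_inj : injective (fun k : 'I_12 => psi k).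
  by move=> i j /(frame_inj (ltn_ord i) (ltn_ord j)) eq_ij; apply: val_inj.
have card_A : #|A| <= #|'I_12|.
  rewrite -(card_codom psi_inj); apply/subset_leq_card/subsetP => a _.
  by have [k ltk <-] := frame_surj a; apply/codomP; exists (Ordinal ltk).
have psi_bij := inj_card_bij psi_inj card_A.
have [phiA psiK phiK] := psi_bij.
have phiA_psi k : k < 12 -> phiA (psi k) = inord k.
  by move=> ltk; have := psiK (inord k); rewrite /= inordK.
pose out v := odflt (psi 0) [pick a | s a == v].
have src_out v : s (out v) = v.
  rewrite /out; case: pickP => [a /eqP // | none].
  have /card_gt0P [a] : 0 < #|[set a | s a == v]| by rewrite card_src_arrows.
  by rewrite inE none.
pose phiV v := tetra_src (phiA (out v)).
have phiV_src a : tetra_src (phiA a) = phiV (s a).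
  congr inord; apply/frame_src => //; by rewrite !phiK src_out.
have phiV_inj : injective phiV.
  move=> v w /(congr1 val); rewrite /= !inordK ?tet_src_lt //.
  by move/frame_src; rewrite !phiK !src_out; apply.
have card_V6 : #|'I_6| <= #|V|.
  by rewrite card_ord -(leq_pmul2r (isT : 0 < 2)) -card_arrows -(bij_eq_card psi_bij) card_ord.
exists phiV, phiA; split=> //.
- exact: inj_card_bij.
- by exists (fun k : 'I_12 => psi k).
- move=> a; rewrite -src_f -phiV_src -{2}(phiK a) psi_f // phiA_psi ?tet_f_lt //.
  by rewrite tetra_src_inord ?tet_f_lt // tet_src_f.
- by move=> a; rewrite -{2}(phiK a) psi_f // phiA_psi ?tet_f_lt.
Qed.

End Frame.

Lemma tetrahedral_frame : is_tetrahedral s t f -> exists psi, tet_frame psi.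
Proof.
case=> phiV [phiA [[psiV phiVK _] [psiA phiAK psiAK] src_phi _ f_phi]].
have src_psi k : phiV (s (psiA k)) = tetra_src k by rewrite -src_phi psiAK.
exists (fun k => psiA (inord k)); split=> k ltk.
  by apply: (can_inj phiAK); rewrite -f_phi !psiAK tetra_f_inord.
have ltbk := tet_bar_lt ltk.
have src_bk : s (psiA (inord (tet_bar k))) = s (psiA (inord k)).
  by apply: (can_inj phiVK); rewrite !src_psi !tetra_src_inord // tet_src_bar.
have [eq_bk | -> //] := qbar_eq_src src_bk.
have /(congr1 (val \o phiA)) := eq_bk; rewrite /= !psiAK !inordK // => /eqP.
by rewrite (negbTE (tet_bar_neq ltk)).
Qed.

Section FrameOfArrow.
Variable b : A.
Hypothesis gK3_b : g (g (g b)) = b.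
Hypothesis gK3_bar_b : g (g (g (bar b))) = bar b.
Hypothesis gK3_f_b : g (g (g (f b))) = f b.
Hypothesis gK3_f_bar_b : g (g (g (f (bar b)))) = f (bar b).

(* Entry k is the image of the tetrahedral arrow k, with b in the role of alpha. *)
Definition frame_of (k : nat) : A :=
  nth b [:: b; g (g (f (bar b))); g (g (f b)); g b; f (bar b); g (f (bar b));
            g (g b); g (bar b); bar b; g (g (bar b)); f b; g (f b)] k.

Lemma frame_of_g k : k < 12 -> g (frame_of k) = frame_of (tet_g k).
Proof.
by case: k => [|[|[|[|[|[|[|[|[|[|[|[|k]]]]]]]]]]]] //= _;
  rewrite ?gK3_b ?gK3_bar_b ?gK3_f_b ?gK3_f_bar_b.
Qed.

Lemma frame_of_bar k : k < 12 -> bar (frame_of k) = frame_of (tet_bar k).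
Proof.
have E1 : bar (g (g b)) = g (f (bar b)) := qbar_qg2 gK3_b.
have E2 : bar (g (g (bar b))) = g (f b) by rewrite qbar_qg2 // qbarK.
have E3 : bar (g (g (f b))) = g (g (f (bar b))).
  by rewrite qbar_qg2 // -/(g b) [f (g b)]f_qg E1.
case: k => [|[|[|[|[|[|[|[|[|[|[|[|k]]]]]]]]]]]] //= _; rewrite /frame_of /=;
  first [exact: qbarK | exact: E1 | exact: E2 | exact: E3
        | by rewrite -E1 qbarK | by rewrite -E2 qbarK | by rewrite -E3 qbarK].
Qed.

Lemma tet_frame_of : tet_frame frame_of.
Proof.
split=> k ltk; last exact: frame_of_bar.
by rewrite f_qg frame_of_g // frame_of_bar ?tet_g_lt // tet_bar_g.
Qed.

Lemma qg3_tetrahedral : is_tetrahedral s t f.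
Proof. by have [psi_f psi_bar] := tet_frame_of; apply: frame_tetrahedral psi_f psi_bar. Qed.

End FrameOfArrow.

Lemma tetrahedral_nq : is_tetrahedral s t f -> forall a, nq s f a = 3.
Proof. by case/tetrahedral_frame => psi [psi_f psi_bar]; apply: frame_nq psi_f psi_bar. Qed.

End TriangulationQuiver.

Theorem lemma6p6 (V A : finType) (s t : A -> V) (f : {perm A}) :
  is_triangulation_quiver s t f -> 3 <= #|V| ->
  [/\ is_tetrahedral s t f <-> (forall a : A, nq s f a = 3),
      is_tetrahedral s t f <-> (forall a : A, qg s f (qg s f (qg s f a)) = a)
    & is_tetrahedral s t f <->
      (exists b : A, [/\ nq s f b = 3, nq s f (qbar s b) = 3,
                         nq s f (f b) = 3 & nq s f (f (qbar s b)) = 3])].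
Proof.
move=> tq card_V.
have tetra_nq := tetrahedral_nq tq card_V.
have nq3_qg3 := nq3_qg3 tq.
have /card_gt0P [b0 _] : 0 < #|A| by rewrite (card_arrows tq); case: #|V| card_V.
split; split=> [tetra | H].
- exact: tetra_nq.
- by apply: (qg3_tetrahedral (b := b0) tq card_V); apply: nq3_qg3; apply: H.
- by move=> a; apply/nq3_qg3/tetra_nq.
- exact: (qg3_tetrahedral (b := b0) tq card_V).
- by exists b0; rewrite !tetra_nq.
- by case: H => b [? ? ? ?]; apply: (qg3_tetrahedral (b := b) tq card_V); apply: nq3_qg3.
Qed.
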